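(* Let $r\geq 2$, let $A$ be a nonnegative symmetric cubical $r$-matrix of order $n$, and let $p\geq r$ be real. Then $\eta^{(p)}(A)=\|A\|_p$.
   Context: A cubical $r$-matrix of order $n$ is a function $A$ on $[n]^r$ with values $a_{i_1,\ldots,i_r}$; it is symmetric if $a_{i_1,\ldots,i_r}$ is invariant under all permutations of the indices. For real symmetric $A$, $P_A(\mathbf{x})=\sum_{i_1,\ldots,i_r}a_{i_1,\ldots,i_r}x_{i_1}\cdots x_{i_r}$ for $\mathbf{x}\in\mathbb{R}^n$, and $\eta^{(p)}(A)=\max\{|P_A(\mathbf{x})|:\mathbf{x}\in\mathbb{R}^n,\ |\mathbf{x}|_p=1\}$. The linear form is $L_A(\mathbf{x}^{(1)},\ldots,\mathbf{x}^{(r)})=\sum a_{i_1,\ldots,i_r}\overline{x^{(1)}_{i_1}}\cdots\overline{x^{(r)}_{i_r}}$ for $\mathbf{x}^{(k)}\in\mathbb{C}^{n}$, and the spectral $p$-norm is $\|A\|_p=\max\{|L_A(\mathbf{x}^{(1)},\ldots,\mathbf{x}^{(r)})|:|\mathbf{x}^{(1)}|_p=\cdots=|\mathbf{x}^{(r)}|_p=1\}$, with $|\cdot|_p$ the $\ell^p$ norm. *)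

From HB Require Import structures.
From mathcomp Require Import all_boot all_order all_algebra all_fingroup.
From mathcomp Require Import all_classical all_reals all_analysis.
From mathcomp Require Import complex.
Set Implicit Arguments. Unset Strict Implicit. Unset Printing Implicit Defensive.
Import Order.TTheory GRing.Theory Num.Theory.
Local Open Scope ring_scope.
Local Open Scope classical_set_scope.

Definition cubmx (R : Type) (r n : nat) := r.-tuple 'I_n -> R.

Section Defs.
Variable R : realType.

Definition cub_symmetric (r n : nat) (A : cubmx R r n) : Prop :=
  forall (s : 'S_r) (i : r.-tuple 'I_n),
    A [tuple tnth i (s k) | k < r] = A i.

Definition cub_nonneg (r n : nat) (A : cubmx R r n) : Prop :=
  forall i, 0 <= A i.

Definition lpnormR (n : nat) (p : R) (x : 'I_n -> R) : R :=
  (\sum_(j < n) `|x j| `^ p) `^ p^-1.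

Definition cmod (z : complex R) : R := Num.sqrt (complex.Re z ^+ 2 + complex.Im z ^+ 2).

Definition lpnormC (n : nat) (p : R) (x : 'I_n -> complex R) : R :=
  (\sum_(j < n) cmod (x j) `^ p) `^ p^-1.

Definition PA (r n : nat) (A : cubmx R r n) (x : 'I_n -> R) : R :=
  \sum_(i : r.-tuple 'I_n) A i * \prod_(k < r) x (tnth i k).

(* eta^(p)(A) = max { |P_A(x)| : x in R^n, |x|_p = 1 } (taken as sup; the max is attained) *)
Definition eta_p (r n : nat) (p : R) (A : cubmx R r n) : R :=
  sup [set `|PA A x| | x in [set x : 'I_n -> R | lpnormR p x = 1]].

Definition LA (r n : nat) (A : cubmx R r n) (xs : 'I_r -> 'I_n -> complex R)
  : complex R :=
  \sum_(i : r.-tuple 'I_n)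
    (Complex (A i) 0) * \prod_(k < r) complex.conjc (xs k (tnth i k)).

Definition spec_pnorm (r n : nat) (p : R) (A : cubmx R r n) : R :=
  sup [set cmod (LA A xs) |
        xs in [set xs : 'I_r -> 'I_n -> complex R | forall k, lpnormC p (xs k) = 1]].

End Defs.

From HB Require Import structures.
From mathcomp Require Import all_boot all_order all_algebra all_fingroup.
From mathcomp Require Import all_classical all_reals all_analysis.
From mathcomp Require Import complex.
From mathcomp Require Import lra.
Import Order.TTheory GRing.Theory Num.Theory.
Local Open Scope ring_scope.
Local Open Scope classical_set_scope.

(* Taking x^(1) = ... = x^(r) = x real shows eta^(p)(A) <= ||A||_p.  Conversely,
   since A >= 0, |L_A(x^(1),...,x^(r))| <= L_A(y_1,...,y_r) with y_k = |x^(k)|.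
   Symmetry of A lets us average this over all permutations of the r slots; for
   each index tuple i, AM-GM bounds the permutation sum of y_1(i_s1)...y_r(i_sr)
   by r! m(i_1)...m(i_r), where m_j = (mean_k y_k(j)^p)^(1/p), the power-mean
   inequality (r <= p) controlling sum_k y_k(j)^r by r m_j^r.  Hence
   |L_A| <= P_A(m), and m is again a unit vector of l^p. *)

Section PermutationAGM.
Variable R : realFieldType.

Lemma prod_le_mean_exprn (r : nat) (b : 'I_r -> R) :
  (0 < r)%N -> (forall k, 0 <= b k) -> \prod_k b k <= (\sum_k b k ^+ r) / r%:R.
Proof.
move=> r_gt0 b_ge0.
have := leif_AGM (A := predT) (E := fun k => b k ^+ r) _.
rewrite /= card_ord prodrXl => /(_ (fun k _ => exprn_ge0 r (b_ge0 k))) [+ _].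
rewrite ler_pXn2r // ?nnegrE ?prodr_ge0 // divr_ge0 // ?sumr_ge0 // => k _.
exact: exprn_ge0.
Qed.

(* The sum over s does not depend on k (compose s with a transposition), and its
   sum over all k is r! times the sum of g. *)
Lemma sum_perm_app (r : nat) (g : 'I_r -> R) (k : 'I_r) :
  r%:R * \sum_(s : 'S_r) g (s k) = r`!%:R * \sum_j g j.
Proof.
have sum_perm_app_indep k' : \sum_(s : 'S_r) g (s k) = \sum_(s : 'S_r) g (s k').
  rewrite (reindex_inj (mulgI (tperm k k'))) /=.
  by apply: eq_bigr => s _; rewrite permM tpermL.
transitivity (\sum_(k' < r) \sum_(s : 'S_r) g (s k')).
  by rewrite -(eq_bigr _ (fun k' _ => sum_perm_app_indep k')) sumr_const card_ord mulr_natl.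
rewrite exchange_big /=.
have sum_perm_reindex (s : 'S_r) : \sum_(k' < r) g (s k') = \sum_j g j.
  by rewrite [RHS](reindex_perm s).
under eq_bigr => s _ do rewrite sum_perm_reindex.
by rewrite sumr_const card_Sn mulr_natl.
Qed.

Lemma psum_exprn_eq0 (I : finType) (r : nat) (b : I -> R) (i : I) :
  (0 < r)%N -> (forall j, 0 <= b j) -> \sum_j b j ^+ r <= 0 -> b i = 0.
Proof.
move=> r_gt0 b_ge0 sum_le0; apply/eqP.
have := expf_eq0 (b i) r; rewrite r_gt0 /= => <-; apply/eqP.
have /psumr_eq0P-> // : \sum_j b j ^+ r = 0.
  by apply/le_anti; rewrite sum_le0 sumr_ge0 // => j _; apply: exprn_ge0.
by move=> j _; apply: exprn_ge0.
Qed.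

Section SumPermProd.
Variables (r : nat) (Y : 'I_r -> 'I_r -> R) (c : 'I_r -> R).
Hypotheses (r_gt0 : (0 < r)%N) (Y_ge0 : forall k j, 0 <= Y k j).
Hypothesis Y_col : forall j, \sum_k Y k j ^+ r <= r%:R * c j ^+ r.

Let rR_neq0 : (r%:R : R) != 0. Proof. by rewrite pnatr_eq0 -lt0n. Qed.

Lemma sum_perm_prod_le_pos : (forall j, 0 < c j) ->
  \sum_(s : 'S_r) \prod_k Y k (s k) <= r`!%:R * \prod_j c j.
Proof.
(* normalising by c turns the column condition into \sum_k F k j <= r *)
move=> c_gt0; pose F k j := (Y k j / c j) ^+ r.
have prodc_ge0 : 0 <= \prod_j c j by rewrite prodr_ge0 // => j _; apply: ltW.
have prod_le (s : 'S_r) : \prod_k Y k (s k) <= \prod_j c j * ((\sum_k F k (s k)) / r%:R).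
  have -> : \prod_k Y k (s k) = \prod_k c (s k) * \prod_k (Y k (s k) / c (s k)).
    by rewrite -big_split /=; apply: eq_bigr => k _; rewrite mulrC divfK ?gt_eqF.
  have -> : \prod_k c (s k) = \prod_j c j by rewrite [RHS](reindex_perm s).
  apply: ler_wpM2l => //.
  by apply: prod_le_mean_exprn => // k; rewrite divr_ge0 // ltW.
have sum_F_le : \sum_k \sum_j F k j <= r%:R * r%:R.
  have -> : (r%:R : R) * r%:R = \sum_(j < r) r%:R by rewrite sumr_const card_ord mulr_natl.
  rewrite exchange_big ler_sum // => j _.
  under eq_bigr => k _ do rewrite /F expr_div_n.
  by rewrite -mulr_suml ler_pdivrMr ?exprn_gt0 ?Y_col.
apply: le_trans (ler_sum _ (fun s _ => prod_le s)) _.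
rewrite -mulr_sumr -mulr_suml exchange_big /=.
have sum_perm_F k : \sum_(s : 'S_r) F k (s k) = r`!%:R / r%:R * \sum_j F k j.
  by apply: (mulfI rR_neq0); rewrite sum_perm_app mulrA mulrCA divff ?mulr1.
rewrite (eq_bigr _ (fun k _ => sum_perm_F k)) -mulr_sumr mulrC ler_wpM2r //.
rewrite ler_pdivrMr ?ltr0n // -mulrA ler_wpM2l ?divr_ge0 //.
by rewrite mulrC ler_pdivrMr ?ltr0n.
Qed.

Lemma sum_perm_prod_le : (forall j, 0 <= c j) ->
  \sum_(s : 'S_r) \prod_k Y k (s k) <= r`!%:R * \prod_j c j.
Proof.
move=> c_ge0.
have [/existsP[j0 /eqP cj0]|/existsPn c_neq0] := boolP [exists j, c j == 0].
  have Y_j0 k : Y k j0 = 0.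
    apply: (@psum_exprn_eq0 _ r (Y^~ j0)) => //.
    by have := Y_col j0; rewrite cj0 expr0n gtn_eqF // mulr0.
  rewrite big1 ?mulr_ge0 ?prodr_ge0 // => s _.
  by rewrite (bigD1 ((s^-1)%g j0)) //= permKV Y_j0 mul0r.
by apply: sum_perm_prod_le_pos => j; rewrite lt_def c_neq0 c_ge0.
Qed.

End SumPermProd.
End PermutationAGM.

Section PowerMean.
Variable R : realType.

(* Young's inequality with exponents 1/t and 1/(1-t), applied to u^t and 1. *)
Lemma powR_le_tangent (t u : R) : 0 < t <= 1 -> 0 <= u -> u `^ t <= 1 + t * (u - 1).
Proof.
move=> /andP[t_gt0 t_le1] u_ge0.
have [->|t_neq1] := eqVneq t 1; first by rewrite powRr1 // mul1r addrC subrK.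
have t'_gt0 : 0 < 1 - t by rewrite subr_gt0 lt_neqAle t_neq1.
have := @conjugate_powR R (u `^ t) 1 t^-1 (1 - t)^-1 (powR_ge0 _ _) ler01.
rewrite !invr_gt0 t_gt0 t'_gt0 => /(_ isT isT); rewrite !invrK addrC subrK => /(_ erefl).
rewrite mulr1 -powRrM mulfV ?gt_eqF // powRr1 // powR1.
lra.
Qed.

Lemma sum_exprn_le_power_mean (r : nat) (p : R) (a : 'I_r -> R) :
  (0 < r)%N -> r%:R <= p -> (forall k, 0 <= a k) ->
  \sum_k a k ^+ r <= r%:R * (((\sum_k a k `^ p) / r%:R) `^ p^-1) ^+ r.
Proof.
move=> r_gt0 r_le_p a_ge0.
have rR_gt0 : (0 : R) < r%:R by rewrite ltr0n.
have p_gt0 : 0 < p by apply: lt_le_trans r_le_p.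
set B := (\sum_k a k `^ p) / r%:R.
have B_ge0 : 0 <= B by rewrite divr_ge0 ?sumr_ge0 ?ltW // => k _; apply: powR_ge0.
pose t := p^-1 * r%:R.
have t_itv : 0 < t <= 1 by rewrite /t mulr_gt0 ?invr_gt0 //= mulrC ler_pdivrMr // mul1r.
have -> : (B `^ p^-1) ^+ r = B `^ t by rewrite -powR_mulrn ?powR_ge0 // -powRrM.
have a_exprn k : a k ^+ r = (a k `^ p) `^ t.
  by rewrite -powRrM /t mulrA mulfV ?gt_eqF // mul1r powR_mulrn.
have [B0|B_neq0] := eqVneq B 0.
  have a0 k : a k = 0.
    apply: (@powR_eq0_eq0 _ _ p); apply/eqP; move: B0 => /eqP.
    rewrite /B mulf_eq0 invr_eq0 pnatr_eq0 gtn_eqF // orbF => /eqP.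
    by move/psumr_eq0P => -> // i _; apply: powR_ge0.
  by rewrite big1 ?mulr_ge0 ?powR_ge0 // => k _; rewrite a0 expr0n gtn_eqF.
(* concavity of u |-> u `^ t, through its tangent at the mean B *)
apply: (@le_trans _ _ (\sum_k B `^ t * (1 + t * (a k `^ p / B - 1)))).
  apply: ler_sum => k _.
  have ak_ge0 : 0 <= a k `^ p / B by rewrite divr_ge0 ?powR_ge0.
  rewrite a_exprn -{1}[a k `^ p](divfK B_neq0) mulrC powRM //.
  by apply: ler_wpM2l; [exact: powR_ge0 | exact: powR_le_tangent].
rewrite -mulr_sumr mulrC ler_wpM2r ?powR_ge0 //.
rewrite big_split /= sumr_const card_ord -mulr_sumr sumrB -mulr_suml sumr_const card_ord.
have -> : \sum_k a k `^ p = r%:R * B by rewrite /B mulrC divfK // gt_eqF.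
by rewrite mulfK // subrr mulr0 addr0.
Qed.

Lemma powR_inv_eq1 (p S : R) : 0 < p -> 0 <= S -> S `^ p^-1 = 1 -> S = 1.
Proof.
move=> p_gt0 S_ge0 /(congr1 (fun z => z `^ p)).
by rewrite -powRrM mulVf ?gt_eqF // powRr1 // powR1.
Qed.

End PowerMean.

Section ComplexModulus.
Variable R : realType.

Lemma cmodE (z : complex R) : cmod z = Normc.normc z.
Proof. by case: z. Qed.

Lemma cmod_ge0 (z : complex R) : 0 <= cmod z.
Proof. exact: sqrtr_ge0. Qed.

Lemma cmodM (x y : complex R) : cmod (x * y) = cmod x * cmod y.
Proof. by rewrite !cmodE Normc.normcM. Qed.

Lemma cmod_real (a : R) : cmod (Complex a 0) = `|a|.
Proof. by rewrite /cmod /= expr0n /= addr0 sqrtr_sqr. Qed.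

Lemma cmod_conj (z : complex R) : cmod (conjc z) = cmod z.
Proof. by case: z => a b; rewrite /cmod /= sqrrN. Qed.

Lemma cmod_sum_le (I : finType) (F : I -> complex R) :
  cmod (\sum_i F i) <= \sum_i cmod (F i).
Proof.
elim/big_rec2: _ => [|i y1 y2 _ IH]; first by rewrite cmod_real normr0.
by rewrite cmodE; apply: le_trans (le_normcD _ _) _; rewrite -!cmodE lerD2l.
Qed.

Lemma cmod_prod (I : finType) (F : I -> complex R) :
  cmod (\prod_i F i) = \prod_i cmod (F i).
Proof. by apply: big_morph; [exact: cmodM | rewrite cmod_real normr1]. Qed.

Lemma lpnormC_real (n : nat) (p : R) (x : 'I_n -> R) :
  lpnormC p (fun j => Complex (x j) 0) = lpnormR p x.
Proof. by rewrite /lpnormC /lpnormR; under eq_bigr => j _ do rewrite cmod_real. Qed.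

End ComplexModulus.

Definition lp_mean {R : realType} {r n : nat} (p : R) (y : 'I_r -> 'I_n -> R)
    (j : 'I_n) : R :=
  ((\sum_k y k j `^ p) / r%:R) `^ p^-1.

Section SymmetricForm.
Variables (R : realType) (r n : nat) (A : cubmx R r n).

Lemma sym_sum_perm_slots (y : 'I_r -> 'I_n -> R) (s : 'S_r) : cub_symmetric A ->
  \sum_(i : r.-tuple 'I_n) A i * \prod_k y k (tnth i k) =
  \sum_(i : r.-tuple 'I_n) A i * \prod_k y k (tnth i (s k)).
Proof.
move=> A_sym; pose h (i : r.-tuple 'I_n) := [tuple tnth i (s k) | k < r].
have h_inj : injective h.
  move=> i1 i2 /(congr1 (fun t => tnth t ((s^-1)%g _))) h_eq.
  by apply: eq_from_tnth => j; have := h_eq j; rewrite !tnth_mktuple permKV.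
rewrite (reindex_inj h_inj); apply: eq_bigr => i _.
by rewrite A_sym; congr (_ * _); apply: eq_bigr => k _; rewrite tnth_mktuple.
Qed.

Lemma multilinear_le_PA_lp_mean (p : R) (y : 'I_r -> 'I_n -> R) :
  (0 < r)%N -> r%:R <= p -> cub_nonneg A -> cub_symmetric A ->
  (forall k j, 0 <= y k j) ->
  \sum_(i : r.-tuple 'I_n) A i * \prod_k y k (tnth i k) <= PA A (lp_mean p y).
Proof.
move=> r_gt0 r_le_p A_ge0 A_sym y_ge0.
rewrite -(@ler_pM2l _ r`!%:R) ?ltr0n ?fact_gt0 //.
have -> : r`!%:R * (\sum_(i : r.-tuple 'I_n) A i * \prod_k y k (tnth i k)) =
    \sum_(s : 'S_r) \sum_(i : r.-tuple 'I_n) A i * \prod_k y k (tnth i (s k)).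
  rewrite -(eq_bigr _ (fun s _ => sym_sum_perm_slots y s A_sym)).
  by rewrite sumr_const card_Sn mulr_natl.
rewrite exchange_big /PA mulr_sumr; apply: ler_sum => i _.
rewrite -mulr_sumr mulrCA; apply: ler_wpM2l; first exact: A_ge0.
apply: (@sum_perm_prod_le _ _ (fun k j => y k (tnth i j))) => // j.
  exact: sum_exprn_le_power_mean.
exact: powR_ge0.
Qed.

Lemma lpnormR_lp_mean (p : R) (y : 'I_r -> 'I_n -> R) : (0 < r)%N -> 0 < p ->
  (forall k, \sum_j y k j `^ p = 1) -> lpnormR p (lp_mean p y) = 1.
Proof.
move=> r_gt0 p_gt0 y_unit; rewrite /lpnormR.
have rR_gt0 : (0 : R) < r%:R by rewrite ltr0n.
under eq_bigr => j _.
  rewrite ger0_norm ?powR_ge0 // -powRrM mulVf ?gt_eqF // powRr1; last first.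
    by rewrite divr_ge0 ?sumr_ge0 ?ltW // => k _; apply: powR_ge0.
  over.
rewrite -mulr_suml exchange_big /=.
under eq_bigr => k _ do rewrite y_unit.
by rewrite sumr_const card_ord -mulr_natr mul1r divff ?gt_eqF // powR1.
Qed.

End SymmetricForm.

Lemma sup_subset_cofinal (R : realType) (S1 S2 : set R) : S1 `<=` S2 ->
  (forall b, S2 b -> exists2 a, S1 a & b <= a) -> sup S1 = sup S2.
Proof.
move=> S12 cofinal.
have ub21 u : ubound S1 u -> ubound S2 u.
  by move=> ub1 b /cofinal [a /ub1 a_le_u b_le_a]; apply: le_trans a_le_u.
have [[S2_n0 [u ub2]]|no_sup2] := pselect (has_sup S2).
  have S1_n0 : S1 !=set0 by have [b /cofinal [a S1a _]] := S2_n0; exists a.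
  have S1_ub : has_ubound S1 by exists u => x /S12 /ub2.
  apply/le_anti/andP; split.
    by apply: ge_sup => // x /S12; apply: ub_le_sup; exists u.
  by apply: ge_sup => //; apply: ub21; apply: sup_upper_bound.
rewrite (sup_out no_sup2) sup_out // => -[[a S1a] [u ub1]]; apply: no_sup2.
by split; [exists a; apply: S12 | exists u; apply: ub21].
Qed.

Lemma LA_real {R : realType} {r n : nat} (A : cubmx R r n) (x : 'I_n -> R) :
  LA A (fun _ j => Complex (x j) 0) = Complex (PA A x) 0.
Proof.
have real_cplx (a : R) : Complex a 0 = (a%:C)%C by [].
rewrite /LA /PA real_cplx rmorph_sum; apply: eq_bigr => i _.
rewrite rmorphM rmorph_prod real_cplx; congr (_ * _); apply: eq_bigr => k _.
by rewrite /conjc /= oppr0.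
Qed.

Lemma cmod_LA_le {R : realType} {r n : nat} (A : cubmx R r n)
    (xs : 'I_r -> 'I_n -> complex R) : cub_nonneg A ->
  cmod (LA A xs) <= \sum_(i : r.-tuple 'I_n) A i * \prod_k cmod (xs k (tnth i k)).
Proof.
move=> A_ge0; rewrite /LA; apply: le_trans; first exact: cmod_sum_le.
apply: ler_sum => i _.
rewrite cmodM cmod_real ger0_norm // cmod_prod.
by under eq_bigr => k _ do rewrite cmod_conj.
Qed.

Theorem theorem2 (R : realType) (r n : nat) (A : cubmx R r n) (p : R) :
  (2 <= r)%N -> cub_nonneg A -> cub_symmetric A -> r%:R <= p ->
  eta_p p A = spec_pnorm p A.
Proof.
move=> r_ge2 A_ge0 A_sym r_le_p.
have r_gt0 : (0 < r)%N by apply: leq_trans r_ge2.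
have p_gt0 : 0 < p by apply: lt_le_trans r_le_p; rewrite ltr0n.
apply: sup_subset_cofinal => [_ [x x_unit <-]|_ [xs xs_unit <-]].
  exists (fun _ j => Complex (x j) 0); last by rewrite LA_real cmod_real.
  by move=> k; rewrite lpnormC_real.
pose y k j := cmod (xs k j).
have y_ge0 k j : 0 <= y k j by apply: cmod_ge0.
have y_unit k : \sum_j y k j `^ p = 1.
  apply: (@powR_inv_eq1 _ p _ p_gt0); last exact: xs_unit.
  by apply: sumr_ge0 => j _; apply: powR_ge0.
exists `|PA A (lp_mean p y)|; first by exists (lp_mean p y) => //; apply: lpnormR_lp_mean.
apply: le_trans (cmod_LA_le A xs A_ge0) _; apply: le_trans (ler_norm _).
exact: multilinear_le_PA_lp_mean.
Qed.
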